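(* Let $n\ge k\ge 2$ and $r\ge 0$ be integers. Then for every real $\alpha>1$, \[ \mathsf{opt}_{\operatorname{bandit}}^{\operatorname{det}}(n,k,r)\le \frac{\alpha}{\alpha-1}\,k\ln\!\left(\frac{n\alpha^r}{k}\right)+k-1. \]
   Context: Prediction with expert advice: $\mathcal{Y}=\{1,\dots,k\}$, $\mathcal{X}=[k]^n$, experts $h_i(x)=x_i$, $i=1,\dots,n$. $\mathcal{P}_r$ is the set of finite sequences of examples in $\mathcal{X}\times\mathcal{Y}$ on which some $h_i$ errs on at most $r$ examples. Bandit feedback: each round the adversary presents $x_t$, a deterministic learner predicts $\hat y_t$ as a function of past observations and $x_t$, and learns only whether $\hat y_t$ equals the true label $y_t$. $\mathsf{opt}_{\operatorname{bandit}}^{\operatorname{det}}(n,k,r)$ is the infimum over deterministic learners of the supremum over $S\in\mathcal{P}_r$ of the number of mistakes ($\hat y_t\ne y_t$). *)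

From HB Require Import structures.
From mathcomp Require Import all_boot all_order all_algebra.
From mathcomp Require Import all_classical all_reals.
From mathcomp Require Import ereal exp.

Set Implicit Arguments.
Unset Strict Implicit.
Unset Printing Implicit Defensive.

(* Labels Y = {1,...,k} are represented by 'I_k = {0,...,k-1};
   instances X = [k]^n are represented by {ffun 'I_n -> 'I_k};
   expert i : 'I_n predicts h_i(x) = x i. *)

Definition inst (n k : nat) := {ffun 'I_n -> 'I_k}.
Definition example (n k : nat) := (inst n k * 'I_k)%type.

(* A past observation of the learner: the instance, its own prediction, and
   the bandit feedback bit (whether the prediction was correct). *)
Definition observation (n k : nat) := (inst n k * 'I_k * bool)%type.

(* A deterministic bandit learner: prediction as a function of the past
   observations (in chronological order) and the current instance. *)
Definition learner (n k : nat) := seq (observation n k) -> inst n k -> 'I_k.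

Definition expert_errors (n k : nat) (i : 'I_n) (S : seq (example n k)) : nat :=
  count (fun e : example n k => e.1 i != e.2) S.

Definition realizable (n k r : nat) (S : seq (example n k)) : Prop :=
  exists i : 'I_n, expert_errors i S <= r.

Fixpoint mistakes_from (n k : nat) (L : learner n k) (h : seq (observation n k))
    (S : seq (example n k)) : nat :=
  match S with
  | [::] => 0
  | (x, y) :: S' =>
      let yh := L h x in
      (yh != y) + mistakes_from L (rcons h (x, yh, yh == y)) S'
  end.

Definition mistakes (n k : nat) (L : learner n k) (S : seq (example n k)) : nat :=
  mistakes_from L [::] S.

Local Open Scope classical_set_scope.
Local Open Scope ereal_scope.

Definition opt_bandit_det (R : realType) (n k r : nat) : \bar R :=
  ereal_inf [set ereal_sup [set ((mistakes L S)%:R)%:E | S in (@realizable n k r)]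
            | L in [set: learner n k]].

From HB Require Import structures.
From mathcomp Require Import all_boot all_order all_algebra.
From mathcomp Require Import all_classical all_reals.
From mathcomp Require Import ereal exp.
From mathcomp Require Import ring lra zify.
Import Order.TTheory GRing.Theory Num.Theory.
Set Implicit Arguments.
Unset Strict Implicit.
Unset Printing Implicit Defensive.

Local Open Scope ring_scope.

(* The learner is weighted majority with weights alpha^(r - e_i), where e_i
   counts the rounds in which the bandit feedback proves expert i wrong, and
   experts with e_i > r are discarded (weight 0).  With W the total weight and
   c = min(k, number of surviving experts), the potential
   alpha/(alpha-1) c ln(W/c) + c - 1 is nonnegative while the best expert
   survives, never increases, and drops by at least 1 at every mistake: either
   c is unchanged and the predicted label, which carries at least W/c of the
   weight, is scaled down by alpha, or c decreases, each discarded expert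
   taking away weight exactly 1.  Its initial value is the claimed bound. *)

Lemma ln_le_subr1 (R : realType) (t : R) : 0 < t -> ln t <= t - 1.
Proof.
by move=> t_gt0; have := @le_ln1Dx R (t - 1); rewrite addrCA subrr addr0; apply; lra.
Qed.

Lemma lnB_le (R : realType) (a b : R) : 0 < a -> 0 < b -> ln a - ln b <= a / b - 1.
Proof. by move=> a_gt0 b_gt0; rewrite -ln_div ?posrE //; apply/ln_le_subr1/divr_gt0. Qed.

Section Potential.
Variables (R : realType) (alpha : R).
Hypothesis alpha_gt1 : 1 < alpha.

Definition potential (c : nat) (W : R) : R :=
  alpha / (alpha - 1) * c%:R * ln (W / c%:R) + c%:R - 1.

Let gain_ge0 : 0 <= alpha / (alpha - 1).
Proof. by apply: divr_ge0; move: alpha_gt1; lra. Qed.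

Lemma potential_ler (c : nat) (W W' : R) :
  (0 < c)%N -> 0 < W' -> W' <= W -> potential c W' <= potential c W.
Proof.
move=> c_gt0 W'_gt0 le_W'W; rewrite /potential !lerD2r.
have c_gt0' : 0 < c%:R :> R by rewrite ltr0n.
apply: ler_wpM2l; first exact: mulr_ge0.
rewrite ler_ln ?posrE ?divr_gt0 //; last by apply: lt_le_trans le_W'W.
by rewrite ler_pM2r ?invr_gt0.
Qed.

Lemma potential_shrink (c : nat) (W W' : R) : (0 < c)%N -> 0 < W' -> 0 < W ->
  W' <= W - (alpha - 1) / alpha * (W / c%:R) -> potential c W' + 1 <= potential c W.
Proof.
move=> c_gt0 W'_gt0 W_gt0 le_W'W.
have alpha1_gt0 : 0 < alpha - 1 by rewrite subr_gt0.
have c_gt0' : 0 < c%:R :> R by rewrite ltr0n.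
have dln : ln (W' / c%:R) - ln (W / c%:R) <= - ((alpha - 1) / alpha / c%:R).
  apply: le_trans (lnB_le (divr_gt0 W'_gt0 c_gt0') (divr_gt0 W_gt0 c_gt0')) _.
  have -> : W' / c%:R / (W / c%:R) = W' / W by field; lra.
  rewrite lerBlDr ler_pdivrMr //; lra.
have := ler_wpM2l (mulr_ge0 gain_ge0 (ler0n R c)) dln.
have -> : alpha / (alpha - 1) * c%:R * - ((alpha - 1) / alpha / c%:R) = -1.
  by field; apply/andP; split; lra.
rewrite /potential mulrBr; lra.
Qed.

Lemma potential_succ (c : nat) (W : R) :
  c.+1%:R <= W -> potential c (W - 1) + 1 <= potential c.+1 W.
Proof.
case: c => [|j] le_jW.
  have := mulr_ge0 gain_ge0 (ln_ge0 le_jW).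
  by rewrite /potential mulr0 mul0r divr1 mulr1; lra.
set c := j.+1 in le_jW *.
have c_gt0 : 0 < c%:R :> R by rewrite ltr0n.
have W1_gt0 : 0 < W - 1 by rewrite -natr1 in le_jW; lra.
set p := (W - 1) / c%:R; set q := W / c.+1%:R.
have p_gt0 : 0 < p by exact: divr_gt0.
have q_gt0 : 0 < q by apply: divr_gt0 => //; lra.
have lnpq := lnB_le p_gt0 q_gt0.
have lnq : - ln q <= 1 / q - 1 by have := lnB_le ltr01 q_gt0; rewrite ln1 sub0r.
(* the two tangent-line bounds add up to exactly zero *)
have balance : c%:R * (p / q - 1) + (1 / q - 1) = 0.
  by rewrite /p /q -natr1; field; apply/andP; split; lra.
have ln_mix : c%:R * ln p - c.+1%:R * ln q <= 0.
  rewrite -natr1 mulrDl mul1r.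
  have := ler_wpM2l (ler0n R c) lnpq; rewrite mulrBr; lra.
have := ler_wpM2l gain_ge0 ln_mix.
rewrite /potential -/p -/q mulr0 mulrBr !mulrA -natr1; lra.
Qed.

Lemma potential_ge0 (c : nat) (W : R) : (0 < c)%N -> c%:R <= W -> 0 <= potential c W.
Proof.
move=> c_gt0 le_cW; have c_ge1 : 1 <= c%:R :> R by rewrite ler1n.
have : 0 <= ln (W / c%:R) by apply: ln_ge0; rewrite ler_pdivlMr ?mul1r //; lra.
move/(mulr_ge0 (mulr_ge0 gain_ge0 (ler0n R c))); rewrite /potential; lra.
Qed.

Variable k : nat.
Hypothesis k_gt0 : (0 < k)%N.

Lemma potential_min_succ (m : nat) (W : R) : (0 < m)%N -> m.+1%:R <= W ->
  potential (minn k m) (W - 1) + (minn k m.+1)%:R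
    <= potential (minn k m.+1) W + (minn k m)%:R.
Proof.
move=> m_gt0 le_mW; have [lt_mk | le_km] := ltnP m k.
  rewrite (minn_idPr lt_mk) -natr1.
  by have := potential_succ le_mW; lra.
rewrite (minn_idPl (leqW le_km)) lerD2r.
have two_le : 2%:R <= m.+1%:R :> R by rewrite ler_nat ltnS.
by apply: potential_ler; [exact: k_gt0 | lra | lra].
Qed.

Lemma potential_min_kill (m d : nat) (W : R) : (0 < m)%N -> (m + d)%:R <= W ->
  potential (minn k m) (W - d%:R) + (minn k (m + d))%:R
    <= potential (minn k (m + d)) W + (minn k m)%:R.
Proof.
move=> m_gt0; elim: d W => [|d IHd] W le_mdW; first by rewrite addn0 subr0.
rewrite addnS in le_mdW *; have W1 : (m + d)%:R <= W - 1 by rewrite -natr1 in le_mdW; lra.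
have := IHd _ W1; have := potential_min_succ (ltn_addr d m_gt0) le_mdW.
have -> : W - d.+1%:R = W - 1 - d%:R by rewrite -natr1; ring.
lra.
Qed.

Lemma potential_min_le (m d : nat) (W W' : R) :
  (0 < m)%N -> m%:R <= W' -> W' <= W - d%:R ->
  potential (minn k m) W' <= potential (minn k (m + d)) W.
Proof.
move=> m_gt0 le_mW' le_W'W.
have W'_gt0 : 0 < W' by apply: lt_le_trans le_mW'; rewrite ltr0n.
have le_mdW : (m + d)%:R <= W by rewrite natrD; lra.
have min_gt0 : (0 < minn k m)%N by rewrite leq_min k_gt0 m_gt0.
have := potential_ler min_gt0 W'_gt0 le_W'W.
have := potential_min_kill m_gt0 le_mdW.
have : (minn k m)%:R <= (minn k (m + d))%:R :> R by rewrite ler_nat; lia.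
lra.
Qed.

Lemma potential_min_lt (m d : nat) (W W' : R) :
  (0 < m)%N -> m%:R <= W' -> W' <= W - d%:R ->
  W' <= W - (alpha - 1) / alpha * (W / (minn k (m + d))%:R) ->
  potential (minn k m) W' + 1 <= potential (minn k (m + d)) W.
Proof.
move=> m_gt0 le_mW' le_W'W shrink.
have W'_gt0 : 0 < W' by apply: lt_le_trans le_mW'; rewrite ltr0n.
have le_mdW : (m + d)%:R <= W by rewrite natrD; lra.
have min_gt0 : (0 < minn k m)%N by rewrite leq_min k_gt0 m_gt0.
have [eq_min | ne_min] := eqVneq (minn k m) (minn k (m + d)).
  rewrite -eq_min in shrink *; apply: potential_shrink shrink => //.
  by have := ler0n R d; lra.
have := potential_ler min_gt0 W'_gt0 le_W'W.
have := potential_min_kill m_gt0 le_mdW.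
have : (minn k m).+1%:R <= (minn k (m + d))%:R :> R by rewrite ler_nat; lia.
rewrite -natr1; lra.
Qed.
End Potential.

Section Weights.
Variables (R : realType) (alpha : R) (r : nat).
Hypothesis alpha_gt1 : 1 < alpha.

Definition weight (e : nat) : R := if (e <= r)%N then alpha ^+ (r - e) else 0.

Lemma weight_ge0 (e : nat) : 0 <= weight e.
Proof. by rewrite /weight; case: ifP => // _; apply: exprn_ge0; move: alpha_gt1; lra. Qed.

Lemma weight_ge1 (e : nat) : (e <= r)%N -> 1 <= weight e.
Proof. by move=> le_er; rewrite /weight le_er; apply: exprn_ege1; move: alpha_gt1; lra. Qed.

Lemma weight_succ_le_div (e : nat) : weight e.+1 <= weight e / alpha.
Proof.
have alpha_gt0 : 0 < alpha by move: alpha_gt1; lra.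
rewrite /weight; case: (ltnP e r) => [lt_er | le_re].
  by rewrite (ltnW lt_er) -(subnSK lt_er) exprS mulrAC mulfV ?mul1r ?gt_eqF.
by rewrite divr_ge0 ?weight_ge0 ?ltW.
Qed.

Lemma weight_succ_le (e : nat) : weight e.+1 <= weight e - (e == r)%:R.
Proof.
have [-> | ne_er] := eqVneq e r; first by rewrite /weight ltnn leqnn subnn expr0 subrr.
apply: le_trans (weight_succ_le_div e) _; rewrite subr0 ler_pdivrMr; last by move: alpha_gt1; lra.
by rewrite ler_peMr ?weight_ge0 ?ltW.
Qed.

Variable n : nat.
Implicit Types (e : 'I_n -> nat) (b : 'I_n -> bool).

Definition total_weight e : R := \sum_(i < n) weight (e i).
Definition num_alive e : nat := \sum_(i < n) (e i <= r).
Definition add_blame e b : 'I_n -> nat := fun i => (e i + b i)%N.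
Definition num_dying e b : nat := \sum_(i < n) (b i && (e i == r)).

Lemma num_alive_le_total_weight e : (num_alive e)%:R <= total_weight e.
Proof.
rewrite natr_sum; apply: ler_sum => i _.
by case: (boolP (e i <= r)%N) => [/weight_ge1 // | _]; exact: weight_ge0.
Qed.

Lemma num_alive_blame e b : num_alive e = (num_alive (add_blame e b) + num_dying e b)%N.
Proof.
rewrite -big_split; apply: eq_bigr => i _ /=; rewrite /add_blame.
by case: (b i); rewrite ?addn0 ?addn1 //=; case: ltngtP.
Qed.

Lemma num_alive_gt0 e (i : 'I_n) : (e i <= r)%N -> (0 < num_alive e)%N.
Proof. by move=> le_eir; rewrite /num_alive (bigD1 i) //= le_eir. Qed.

Lemma total_weight_blame_dying e b :
  total_weight (add_blame e b) <= total_weight e - (num_dying e b)%:R.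
Proof.
rewrite natr_sum -sumrB; apply: ler_sum => i _; rewrite /add_blame.
by case: (b i); rewrite ?addn0 ?subr0 ?addn1 ?weight_succ_le.
Qed.

Lemma total_weight_blame e b :
  total_weight (add_blame e b)
    <= total_weight e - (alpha - 1) / alpha * \sum_(i < n | b i) weight (e i).
Proof.
rewrite big_mkcond mulr_sumr -sumrB; apply: ler_sum => i _; rewrite /add_blame.
case: (b i); rewrite ?addn0 ?mulr0 ?subr0 ?addn1 //.
have -> : weight (e i) - (alpha - 1) / alpha * weight (e i) = weight (e i) / alpha.
  by field; move: alpha_gt1; lra.
exact: weight_succ_le_div.
Qed.
End Weights.

Section ErrorPotential.
Variables (R : realType) (alpha : R) (n k r : nat).
Hypotheses (alpha_gt1 : 1 < alpha) (k_gt0 : (0 < k)%N).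
Implicit Types (e : 'I_n -> nat) (b : 'I_n -> bool).

Definition error_potential e : R :=
  potential alpha (minn k (num_alive r e)) (total_weight alpha r e).

Lemma error_potential_ge0 e : (0 < num_alive r e)%N -> 0 <= error_potential e.
Proof.
move=> alive_gt0; apply: potential_ge0 => //; first by rewrite leq_min k_gt0.
by apply: le_trans (num_alive_le_total_weight r alpha_gt1 e); rewrite ler_nat geq_minr.
Qed.

Lemma error_potential_blame_le e b : (0 < num_alive r (add_blame e b))%N ->
  error_potential (add_blame e b) <= error_potential e.
Proof.
move=> alive_gt0; rewrite /error_potential (num_alive_blame r e b).
apply: potential_min_le => //; first exact: num_alive_le_total_weight.
exact: total_weight_blame_dying.
Qed.

Lemma error_potential_blame_lt e b : (0 < num_alive r (add_blame e b))%N ->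
  total_weight alpha r e
    <= (minn k (num_alive r e))%:R * \sum_(i < n | b i) weight alpha r (e i) ->
  error_potential (add_blame e b) + 1 <= error_potential e.
Proof.
move=> alive_gt0 le_W_blamed; rewrite /error_potential (num_alive_blame r e b).
rewrite (num_alive_blame r e b) in le_W_blamed.
apply: potential_min_lt => //.
- exact: num_alive_le_total_weight.
- exact: total_weight_blame_dying.
apply: le_trans (total_weight_blame r alpha_gt1 e b) _; rewrite lerD2l lerN2.
apply: ler_wpM2l; first by apply: divr_ge0; move: alpha_gt1; lra.
by rewrite ler_pdivrMr ?ltr0n ?leq_min ?k_gt0 ?addn_gt0 ?alive_gt0 // mulrC.
Qed.
End ErrorPotential.

Lemma blame_wrong (T : eqType) (a yh y : T) : (a == yh) (+) (yh == y) -> a != y.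
Proof. by case: (eqVneq a yh) => [-> | ne_a_yh] //= /eqP <-. Qed.

Section WeightedMajority.
Variables (R : realType) (alpha : R) (n k r : nat).
Hypotheses (alpha_gt1 : 1 < alpha) (k_gt0 : (0 < k)%N).
Implicit Types (h : seq (observation n k)) (x : inst n k) (y : 'I_k).

(* Expert [i] is blamed for a round iff it agreed with a wrong prediction or
   disagreed with a correct one: then it was wrong, and otherwise the bandit
   feedback does not tell. *)
Definition observed_errors h (i : 'I_n) : nat :=
  count (fun o : observation n k => (o.1.1 i == o.1.2) (+) o.2) h.

Definition label_weight h x y : R :=
  \sum_(i < n | x i == y) weight alpha r (observed_errors h i).

Definition weighted_majority (y0 : 'I_k) : learner n k :=
  fun h x => [arg max_(y > y0) label_weight h x y]%O.

Lemma label_weight_le_majority y0 h x y :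
  label_weight h x y <= label_weight h x (weighted_majority y0 h x).
Proof. by rewrite /weighted_majority; case: arg_maxP => // y' _; apply. Qed.

Lemma observed_errors_rcons h x yh fb :
  observed_errors (rcons h (x, yh, fb))
    = add_blame (observed_errors h) (fun i => (x i == yh) (+) fb).
Proof. by apply: boolp.funext => i; rewrite /observed_errors -cats1 count_cat /= addn0. Qed.

Lemma total_weight_le_majority y0 h x :
  total_weight alpha r (observed_errors h)
    <= (minn k (num_alive r (observed_errors h)))%:R
       * label_weight h x (weighted_majority y0 h x).
Proof.
set e := observed_errors h; set A := label_weight h x _.
have le_kA : total_weight alpha r e <= k%:R * A.
  rewrite /total_weight (partition_big (fun i => x i) xpredT) //=.
  apply: le_trans (_ : \sum_(y < k) A <= _); last by rewrite sumr_const card_ord mulr_natl.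
  by apply: ler_sum => y _; exact: label_weight_le_majority.
have le_aliveA : total_weight alpha r e <= (num_alive r e)%:R * A.
  rewrite natr_sum mulr_suml; apply: ler_sum => i _.
  case: (boolP (e i <= r)%N) => [_ | dead]; last by rewrite mul0r /weight (negbTE dead).
  rewrite mul1r; apply: le_trans (label_weight_le_majority y0 h x (x i)).
  by rewrite /label_weight (bigD1 i) //= lerDl sumr_ge0 // => j _; exact: weight_ge0.
by rewrite /minn; case: ifP.
Qed.

Lemma error_potential_round y0 h x y (yh := weighted_majority y0 h x) :
  (0 < num_alive r (observed_errors (rcons h (x, yh, yh == y))))%N ->
  error_potential alpha k r (observed_errors (rcons h (x, yh, yh == y))) + (yh != y)%:R
    <= error_potential alpha k r (observed_errors h).
Proof.
rewrite observed_errors_rcons.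
case: (eqVneq yh y) => _ /= alive_gt0; rewrite ?mulr0n ?addr0 ?mulr1n.
  exact: error_potential_blame_le.
apply: error_potential_blame_lt => //.
under eq_bigl do rewrite addbF.
exact: total_weight_le_majority.
Qed.

Lemma weighted_majority_mistakes_from y0 (i : 'I_n) S h :
  (observed_errors h i + expert_errors i S <= r)%N ->
  (mistakes_from (weighted_majority y0) h S)%:R
    <= error_potential alpha k r (observed_errors h).
Proof.
elim: S h => [|[x y] S IHS] h /= le_errors.
  apply: error_potential_ge0 => //; apply: (@num_alive_gt0 _ _ _ i).
  by rewrite /expert_errors /= addn0 in le_errors.
set yh := weighted_majority y0 h x.
have le_blame : (((x i == yh) (+) (yh == y)) <= (x i != y))%N.
  by case: (_ (+) _) (@blame_wrong _ (x i) yh y) => // /(_ isT) ->.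
have le_errors' : (observed_errors (rcons h (x, yh, yh == y)) i + expert_errors i S <= r)%N.
  by rewrite observed_errors_rcons /add_blame; move: le_errors; rewrite /expert_errors /=; lia.
have alive_gt0 : (0 < num_alive r (observed_errors (rcons h (x, yh, yh == y))))%N.
  by apply: (@num_alive_gt0 _ _ _ i); apply: leq_trans le_errors'; exact: leq_addr.
rewrite natrD addrC; apply: le_trans _ (error_potential_round alive_gt0).
by rewrite lerD2r; exact: IHS.
Qed.

Lemma error_potential_init : (k <= n)%N ->
  error_potential alpha k r (observed_errors (@nil (observation n k)))
    = potential alpha k (n%:R * alpha ^+ r).
Proof.
move=> le_kn; rewrite /error_potential /num_alive /total_weight /observed_errors /=.
rewrite sum_nat_const card_ord muln1 (minn_idPl le_kn).
by rewrite sumr_const card_ord /weight subn0 mulr_natl.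
Qed.
End WeightedMajority.

Theorem lemma4p2 (R : realType) (n k r : nat) (alpha : R) :
  (2 <= k)%N -> (k <= n)%N -> 1 < alpha ->
  (opt_bandit_det R n k r <=
   (alpha / (alpha - 1) * k%:R * ln (n%:R * alpha ^+ r / k%:R) + k%:R - 1)%:E)%E.
Proof.
move=> k_ge2 le_kn alpha_gt1; have k_gt0 : (0 < k)%N by exact: ltnW.
pose y0 : 'I_k := Ordinal k_gt0.
apply: le_trans (ereal_inf_lbound _) _.
  by exists (weighted_majority (n := n) alpha r y0).
apply: ge_ereal_sup => _ [S [i le_iS] <-]; rewrite lee_fin.
have := weighted_majority_mistakes_from alpha_gt1 k_gt0 y0 (h := [::]) le_iS.
by rewrite error_potential_init.
Qed.
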